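(* Let $\lambda\in(0,1)$, let $\tau_0(x)=\lambda x$, $\tau_{1/4}(x)=\lambda(x+\frac14)$, let $X_L$ be their attractor, let $W(x)=\cos^2(2\pi x/\lambda)$, and let $R_W$, $P_x$, $\mathbf{N}_0$, $\mathbf{N}_1$, $h_0$, $h_1$ be as described in the context. Then: (1) $h_0$ is continuous on $X_L$ and $R_Wh_0=h_0$. If $h_0$ has no zeroes on $X_L$, then $h_0\equiv1$. (2) If $\lambda=1-\frac1{2n}$ for some $n\in\mathbb{N}$, then $h_1$ is continuous on $X_L$ and $R_Wh_1=h_1$; both $h_0$ and $h_1$ have zeroes and both are non-constant. If $h_0+h_1$ has no zeroes on $X_L$, then $h_0+h_1\equiv1$.
   Context: $X_L$ is the unique nonempty compact set with $X_L=\tau_0(X_L)\cup\tau_{1/4}(X_L)$. Note $W(\tau_0x)+W(\tau_{1/4}x)=1$ for all $x$. The transfer operator is $(R_Wf)(x)=W(\tau_0x)f(\tau_0x)+W(\tau_{1/4}x)f(\tau_{1/4}x)$. Let $\Omega=\{0,\frac14\}^{\mathbb{N}}$ with the $\sigma$-algebra generated by cylinder sets. For $x\in X_L$, $P_x$ is the unique probability measure on $\Omega$ such that for every $n$ and $\omega_1,\dots,\omega_n\in\{0,\frac14\}$, the cylinder $\{\eta\in\Omega:\eta_i=\omega_i,\ i\le n\}$ has measure $W(\tau_{\omega_1}x)W(\tau_{\omega_2}\tau_{\omega_1}x)\cdots W(\tau_{\omega_n}\cdots\tau_{\omega_1}x)$. $\mathbf{N}_0$ is the set of $\omega\in\Omega$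 with $\omega_n=0$ for all sufficiently large $n$; $\mathbf{N}_1$ is the set of $\omega\in\Omega$ with $\omega_n=\frac14$ for all sufficiently large $n$. $h_0(x)=P_x(\mathbf{N}_0)$ and $h_1(x)=P_x(\mathbf{N}_1)$ for $x\in X_L$. *)

From HB Require Import structures.
From mathcomp Require Import all_boot all_order all_algebra.
From mathcomp Require Import all_classical all_reals all_analysis.
Set Implicit Arguments. Unset Strict Implicit. Unset Printing Implicit Defensive.
Import Order.TTheory GRing.Theory Num.Theory numFieldNormedType.Exports.
Local Open Scope classical_set_scope.
Local Open Scope ring_scope.

(* Omega = {0,1/4}^N, encoded as nat -> bool: false <-> 0, true <-> 1/4.
   Index k : nat corresponds to the paper's omega_{k+1}. *)
Definition Om := nat -> bool.

Definition cyl (n : nat) (w : Om) : set Om := [set e | forall i, (i < n)%N -> e i = w i].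

Definition cylinders : set (set Om) := [set A | exists n w, A = cyl n w].

Definition Omega := g_sigma_algebraType cylinders.

Section Defs.
Variable R : realType.

Definition tau (lam : R) (b : bool) (x : R) : R :=
  if b then lam * (x + 4^-1) else lam * x.

Definition W (lam : R) (x : R) : R := (cos (2 * pi * x / lam)) ^+ 2.

Fixpoint taus (lam : R) (w : Om) (k : nat) (x : R) : R :=
  match k with
  | O => x
  | S k' => tau lam (w k') (taus lam w k' x)
  end.

Definition RW (lam : R) (f : R -> R) (x : R) : R :=
  W lam (tau lam false x) * f (tau lam false x) + W lam (tau lam true x) * f (tau lam true x).

Definition cylw (lam : R) (x : R) (n : nat) (w : Om) : R :=
  \prod_(k < n) W lam (taus lam w k.+1 x).

Definition N0 : set Om := [set w | exists m, forall n, (m <= n)%N -> w n = false].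
Definition N1 : set Om := [set w | exists m, forall n, (m <= n)%N -> w n = true].

Definition is_attractor (lam : R) (X : set R) : Prop :=
  X !=set0 /\ compact X /\ X = (tau lam false @` X) `|` (tau lam true @` X).

Definition is_path_measures (lam : R) (X : set R)
  (P : R -> probability Omega R) : Prop :=
  forall x, X x -> forall n (w : Om), P x (cyl n w) = (cylw lam x n w)%:E.

Definition h0 (P : R -> probability Omega R) (x : R) : R := fine (P x N0).
Definition h1 (P : R -> probability Omega R) (x : R) : R := fine (P x N1).
End Defs.

From HB Require Import structures.
From mathcomp Require Import all_boot all_order all_algebra.
From mathcomp Require Import all_classical all_reals all_analysis.
From mathcomp Require Import ring lra.
Import Order.TTheory GRing.Theory Num.Theory numFieldNormedType.Exports.
Local Open Scope classical_set_scope.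
Local Open Scope ring_scope.

(* Conditioning on the first letter gives the Markov property
   P_x(shift^-1 E) = W(tau_0 x) P_{tau_0 x}(E) + W(tau_1/4 x) P_{tau_1/4 x}(E): both sides are
   measures in E that agree on cylinders.  As N_0 and N_1 are shift invariant, h_0 and h_1
   are R_W-harmonic.  Since W is Lipschitz and the tau_b contract by lam, induction on the
   number of letters an event depends on bounds |P_x(E) - P_y(E)| by 4 pi/(1 - lam) |x - y|,
   and monotone limits carry the bound to N_b: h_b is Lipschitz.
   At a fixed point p of tau_b with W(tau_b p) = 1 the constant word b b b ... has probability
   one, so h_b(p) = 1 and h_(not b)(p) = 0; such points are 0 for b = 0, and (2n - 1)/4 for
   b = 1/4 when lam = 1 - 1/(2n).
   The last ingredient is a minimum principle.  The minimisers of a harmonic h on the compact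
   X are stable under every transition of positive weight.  If each minimiser eventually meets
   a zero of W along its tau_b-orbit, then N_b is null from the minimisers; otherwise the
   tau_b-orbit of some minimiser consists of minimisers and converges to the fixed point p, so
   min h = h(p).  When h(p) = 1 >= h, this makes h constant. *)

(** * Elementary analysis and probability *)

Lemma dist_le_cvg {R : realType} {u v : R^nat} {a b c : R} :
  u @ \oo --> a -> v @ \oo --> b -> (forall k, `|u k - v k| <= c) -> `|a - b| <= c.
Proof.
move=> ua vb uv; apply: (ler_cvg_to (cvg_norm (cvgB ua vb)) (cvg_cst c)).
exact: nearW.
Qed.

Lemma within_continuous_cvg {T U : topologicalType} {A : set T} {f : T -> U}
    {u : nat -> T} {p : T} :
  {within A, continuous f} -> A p -> (forall k, A (u k)) -> u @ \oo --> p ->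
  (f \o u) @ \oo --> f p.
Proof.
move=> /subspace_continuousP fc Ap Au up; apply: cvg_comp (fc p Ap).
move=> V /up; apply: (@filterS _ _ _ (fun k => A (u k) -> V (u k))).
by move=> k /(_ (Au k)).
Qed.

Lemma lipschitz_within_continuous {R : realType} {A : set R} {f : R -> R} {L : R} :
  0 <= L -> (forall x y, A x -> A y -> `|f x - f y| <= L * `|x - y|) ->
  {within A, continuous f}.
Proof.
move=> L0 lip; apply/subspace_continuousP => x Ax; apply/cvgrPdist_lt => e e0.
have eL : 0 < e / (L + 1) by rewrite divr_gt0 // ltr_wpDl.
rewrite near_withinE; near_simpl; near=> t => At.
have xt : `|x - t| < e / (L + 1).
  by near: t; apply: (filterS _ (nbhsx_ballx x _ eL)) => t; rewrite -ball_normE.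
rewrite (le_lt_trans (lip _ _ Ax At)) // (@le_lt_trans _ _ ((L + 1) * `|x - t|)) //.
  by rewrite ler_wpM2r // lerDl.
by rewrite mulrC -ltr_pdivlMr // ltr_wpDl.
Unshelve. all: by end_near.
Qed.

Lemma cos_lipschitz (R : realType) (u v : R) : `|cos u - cos v| <= `|u - v|.
Proof.
wlog uv : u v / u <= v.
  by move=> H; case: (leP u v) => [|/ltW] h; [exact: H|rewrite distrC [`|u - v|]distrC; exact: H].
rewrite distrC [`|u - v|]distrC.
have [c _ ->] := MVT_segment uv (fun x _ => is_derive_cos x)
  (continuous_subspaceT (@continuous_cos R)).
rewrite normrM normrN.
by rewrite -[leRHS]mul1r ler_wpM2r // sin_max.
Qed.

Lemma convex_comb_dist {R : realFieldType} {a a' p0 p1 q0 q1 d : R} :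
  0 <= a' <= 1 -> `|p0 - p1| <= 1 -> `|p0 - q0| <= d -> `|p1 - q1| <= d ->
  `|a * p0 + (1 - a) * p1 - (a' * q0 + (1 - a') * q1)| <= `|a - a'| + d.
Proof.
move=> /andP[a'0 a'1] p01 d0 d1.
have -> : a * p0 + (1 - a) * p1 - (a' * q0 + (1 - a') * q1) =
    (a - a') * (p0 - p1) + (a' * (p0 - q0) + (1 - a') * (p1 - q1)) by ring.
rewrite (le_trans (ler_normD _ _)) // lerD //.
  by rewrite normrM -[leRHS]mulr1; apply: ler_wpM2l.
rewrite (le_trans (ler_normD _ _)) // !normrM (ger0_norm a'0).
rewrite (ger0_norm (_ : 0 <= 1 - a')) ?subr_ge0 //.
have -> : d = a' * d + (1 - a') * d by ring.
by apply: lerD; apply: ler_wpM2l; rewrite ?subr_ge0.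
Qed.

Lemma convex_comb_min {R : realFieldType} {a a' u v m : R} :
  0 < a -> 0 <= a' -> a + a' = 1 -> m <= u -> m <= v -> a * u + a' * v = m -> u = m.
Proof.
move=> a0 a'0 aa' mu mv e; apply/eqP; rewrite eq_le mu andbT -subr_le0.
have : a * (u - m) + a' * (v - m) = a * u + a' * v - (a + a') * m by ring.
rewrite e aa' mul1r subrr => /(canRL (addrK _)); rewrite sub0r => e0.
by rewrite -(pmulr_rle0 _ a0) e0 oppr_le0 mulr_ge0 // subr_ge0.
Qed.

Section ProbabilityFine.
Context {d} {T : measurableType d} {R : realType}.
Implicit Types (mu nu : probability T R) (A B : set T).

Lemma fine_probabilityK mu {A} : measurable A -> (fine (mu A))%:E = mu A.
Proof. by move=> mA; rewrite fineK // fin_num_measure. Qed.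

Lemma fine_probability_ge0 mu A : 0 <= fine (mu A).
Proof. exact/fine_ge0/measure_ge0. Qed.

Lemma fine_probability_le1 mu {A} : measurable A -> fine (mu A) <= 1.
Proof. by move=> mA; rewrite -lee_fin fine_probabilityK // probability_le1. Qed.

Lemma fine_probability_mix mu nu (a b : R) {A B} : measurable A -> measurable B ->
  fine (a%:E * mu A + b%:E * nu B)%E = a * fine (mu A) + b * fine (nu B).
Proof. by move=> mA mB; rewrite -(fine_probabilityK mu mA) -(fine_probabilityK nu mB). Qed.

Lemma fine_probability_cvg mu {F : (set T)^nat} {A} : measurable A ->
  (mu \o F) @ \oo --> mu A -> (fun k => fine (mu (F k))) @ \oo --> fine (mu A).
Proof. by move=> mA; rewrite -(fine_probabilityK mu mA) => /fine_cvgP[]. Qed.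

End ProbabilityFine.

(** * The sequence space *)

Definition shift (w : Om) : Om := fun i => w i.+1.
Definition scons (b : bool) (w : Om) : Om := fun i => if i is j.+1 then w j else b.
Definition head_is (b : bool) : set Om := [set w | w 0%N = b].
Definition depends_on (n : nat) (E : set Om) : Prop :=
  forall w w', (forall i, (i < n)%N -> w i = w' i) -> E w -> E w'.

Lemma scons_shift w : scons (w 0%N) (shift w) = w.
Proof. by apply: funext => -[]. Qed.

Lemma split_head (E : set Om) :
  E = (head_is false `&` shift @^-1` (scons false @^-1` E)) `|`
      (head_is true `&` shift @^-1` (scons true @^-1` E)).
Proof.
apply/seteqP; split => w.
  rewrite -{1}(scons_shift w) => Ew.
  by case E0 : (w 0%N) Ew => Ew; [right|left].
by move=> [] [/= <-]; rewrite scons_shift.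
Qed.

Lemma depends_on0 {E} : depends_on 0 E -> E = set0 \/ E = setT.
Proof.
move=> h; have [[w Ew]|/set0P/negP/negbNE/eqP ->] := pselect (E !=set0); last by left.
by right; apply/seteqP; split => // w' _; exact: h Ew.
Qed.

Lemma depends_on_scons {n E} b :
  depends_on n.+1 E -> depends_on n (scons b @^-1` E).
Proof. by move=> h w w' e; apply: h => -[|i] //= /e. Qed.

Lemma shift_preimage_cyl n w :
  shift @^-1` cyl n w = cyl n.+1 (scons false w) `|` cyl n.+1 (scons true w).
Proof.
apply/seteqP; split => e.
  by move=> h; case E: (e 0%N); [right|left] => -[|i] //= Hi; exact: h.
by move=> [] h i Hi; exact: (h i.+1).
Qed.

Lemma head_is_cyl b : head_is b = cyl 1 (fun=> b).
Proof. by apply/seteqP; split => w; [move=> h [|]|apply]. Qed.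

Lemma cyl_scons n b w : cyl n.+1 (scons b w) = head_is b `&` shift @^-1` cyl n w.
Proof.
apply/seteqP; split => e.
  by move=> h; split; [exact: (h 0%N)|move=> i Hi; exact: (h i.+1)].
by move=> [e0 h] [|i] Hi //; exact: h.
Qed.

Local Notation measurableOm := (@measurable _ Omega).

Lemma cyl_measurable n w : measurableOm (cyl n w).
Proof. by apply: sub_sigma_algebra; exists n, w. Qed.

Lemma head_is_measurable b : measurableOm (head_is b).
Proof. by rewrite head_is_cyl; exact: cyl_measurable. Qed.

Lemma shift_measurable : measurable_fun setT (shift : Omega -> Omega).
Proof.
apply: (@measurability _ _ Omega Omega setT shift cylinders) => //.
move=> _ [_ [n [w ->]] <-].
by rewrite setTI shift_preimage_cyl; apply: measurableU; exact: cyl_measurable.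
Qed.

Lemma shift_preimage_measurable {E} : measurableOm E -> measurableOm (shift @^-1` E).
Proof. by move=> mE; rewrite -[X in measurableOm X]setTI; exact: shift_measurable. Qed.

Lemma depends_on_measurable {n E} : depends_on n E -> measurableOm E.
Proof.
elim: n E => [|n IH] E h.
  by case: (depends_on0 h) => ->; [exact: measurable0|exact: measurableT].
rewrite (split_head E); apply: measurableU; apply: measurableI;
  do ?[exact: head_is_measurable]; apply: shift_preimage_measurable;
  apply: IH; exact: depends_on_scons.
Qed.

(* Two cylinders meet in a cylinder or not at all, so adding [set0] gives a
   pi-system; it generates the same sigma-algebra. *)
Definition cylinders0 : set (set Om) := [set A | A = set0 \/ cylinders A].

Lemma measurable_cylinders0 : measurableOm = <<s cylinders0 >>.
Proof.
apply/seteqP; split; apply: smallest_sub; do ?exact: smallest_sigma_algebra.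
  by move=> A cA; apply: sub_sigma_algebra; right.
by move=> A [->|cA]; [exact: measurable0|exact: sub_sigma_algebra].
Qed.

Lemma cylinders0_setI_closed : setI_closed cylinders0.
Proof.
move=> A B [->|[n [w ->]]]; first by left; rewrite set0I.
move=> [->|[m [v ->]]]; first by left; rewrite setI0.
have [agree|] := pselect (forall i, (i < minn n m)%N -> w i = v i).
  right; exists (maxn n m), (fun i => if (i < n)%N then w i else v i).
  apply/seteqP; split => e.
    move=> [h1 h2] i; rewrite leq_max => /orP[] Hi; first by rewrite Hi; apply: h1.
    by case: ifP => Hn; [apply: h1|apply: h2].
  move=> h; split => i Hi; first by rewrite h ?Hi // leq_max Hi.
  rewrite h ?leq_max ?Hi ?orbT //; case: ifP => // Hn.
  by apply: agree; rewrite leq_min Hn.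
move=> /existsNP [i /not_implyP [Hi ne]]; left; apply/seteqP; split => // e [h1 h2].
by apply: ne; move: Hi; rewrite leq_min => /andP[H1 H2]; rewrite -h1 // -h2.
Qed.

(** * Tail events *)

Definition const_between (b : bool) (m k : nat) : set Om :=
  [set w | forall i, (m <= i < k)%N -> w i = b].
Definition const_from (b : bool) (m : nat) : set Om :=
  [set w | forall n, (m <= n)%N -> w n = b].
Definition tail_eq (b : bool) : set Om :=
  [set w | exists m, forall n, (m <= n)%N -> w n = b].

Lemma const_between_depends_on b m k : depends_on k (const_between b m k).
Proof. by move=> w w' e h i /andP[Hm Hk]; rewrite -e // h ?Hm. Qed.

Lemma const_between0 b k : const_between b 0 k = cyl k (fun=> b).
Proof. by apply/seteqP; split => w h i Hi; apply: h. Qed.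

Lemma shift_preimage_const_from b m : shift @^-1` const_from b m = const_from b m.+1.
Proof. by apply/seteqP; split => w h; [case|] => // n Hn; apply: h. Qed.

Lemma shift_preimage_tail_eq b : shift @^-1` tail_eq b = tail_eq b.
Proof.
apply/seteqP; split => w [m h]; first by exists m.+1 => -[|n] // Hn; apply: h.
by exists m => n Hn; apply/h/leqW.
Qed.

Lemma tail_eq_disjoint : tail_eq false `&` tail_eq true = set0.
Proof.
apply/seteqP; split => // w [[m0 h0] [m1 h1]].
by have := h0 _ (leq_maxl m0 m1); rewrite h1 // leq_maxr.
Qed.

Lemma const_between_measurable b m k : measurableOm (const_between b m k).
Proof. exact: depends_on_measurable (const_between_depends_on b m k). Qed.

Lemma const_fromE b m : const_from b m = \bigcap_k const_between b m k.
Proof.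
apply/seteqP; split => w h; first by move=> k _ i /andP[Hm _]; apply: h.
by move=> n Hn; apply: (h n.+1) => //; rewrite Hn ltnSn.
Qed.

Lemma tail_eqE b : tail_eq b = \bigcup_m const_from b m.
Proof. by apply/seteqP; split => w [m] *; exists m. Qed.

Lemma const_from_measurable b m : measurableOm (const_from b m).
Proof.
rewrite const_fromE; by apply: bigcapT_measurable => k; exact: const_between_measurable.
Qed.

Lemma tail_eq_measurable b : measurableOm (tail_eq b).
Proof.
by rewrite tail_eqE; apply: bigcupT_measurable => m; exact: const_from_measurable.
Qed.

Section TailLimits.
Context {R : realType} (mu : probability Omega R) (b : bool).

Lemma const_from_cvg m : (mu \o const_between b m) @ \oo --> mu (const_from b m).
Proof.
rewrite const_fromE; apply: nonincreasing_cvg_mu.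
- by rewrite (le_lt_trans (probability_le1 _ (const_between_measurable b m 0))) ?ltey.
- by move=> k; exact: const_between_measurable.
- by rewrite -const_fromE; exact: const_from_measurable.
- move=> k k' kk'; apply/subsetPset => w h i /andP[Hm Hk]; apply: h.
  by rewrite Hm (leq_trans Hk).
Qed.

Lemma tail_eq_cvg : (mu \o const_from b) @ \oo --> mu (tail_eq b).
Proof.
rewrite tail_eqE; apply: nondecreasing_cvg_mu.
- by move=> m; exact: const_from_measurable.
- by rewrite -tail_eqE; exact: tail_eq_measurable.
- by move=> m m' mm'; apply/subsetPset => w h n Hn; apply/h/(leq_trans mm').
Qed.

End TailLimits.

(** * The maps and the weight *)

Section Maps.
Context {R : realType} {lam : R}.

Lemma tau_affine b x y : tau lam b x = tau lam b y + lam * (x - y).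
Proof. by case: b; rewrite /tau; ring. Qed.

Lemma taus_scons b w k x : taus lam (scons b w) k.+1 x = taus lam w k (tau lam b x).
Proof. by elim: k => [|k /= <-]. Qed.

Lemma taus_const b k x : taus lam (fun=> b) k x = iter k (tau lam b) x.
Proof. by elim: k => //= k ->. Qed.

Lemma cylw_scons x n b w :
  cylw lam x n.+1 (scons b w) = W lam (tau lam b x) * cylw lam (tau lam b x) n w.
Proof.
rewrite /cylw big_ord_recl; congr (_ * _).
by apply: eq_bigr => i _; rewrite taus_scons.
Qed.

Lemma W_ge0 x : 0 <= W lam x.
Proof. exact: sqr_ge0. Qed.

Lemma W_le1 x : W lam x <= 1.
Proof. by rewrite /W cos2sin2 gerBl sqr_ge0. Qed.

Hypothesis lam_neq0 : lam != 0.

Lemma W_tau_false x : W lam (tau lam false x) = cos (2 * pi * x) ^+ 2.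
Proof. by rewrite /W /tau; congr (cos _ ^+ 2); field. Qed.

Lemma W_tau_true x : W lam (tau lam true x) = sin (2 * pi * x) ^+ 2.
Proof.
by rewrite /W /tau -[sin _]opprK -cosDpihalf sqrrN; congr (cos _ ^+ 2); field.
Qed.

Lemma W_tau_sum b x : W lam (tau lam b x) + W lam (tau lam (~~ b) x) = 1.
Proof.
rewrite -(cos2Dsin2 (2 * pi * x)) -W_tau_false -W_tau_true.
by case: b; [rewrite addrC|].
Qed.

Lemma W_tau_false_lipschitz x y :
  `|W lam (tau lam false x) - W lam (tau lam false y)| <= 4 * pi * `|x - y|.
Proof.
rewrite !W_tau_false subr_sqr normrM.
have -> : 4 * pi * `|x - y| = `|2 * pi * x - 2 * pi * y| * 2.
  by rewrite -mulrBr normrM ger0_norm ?mulr_ge0 ?pi_ge0 //; ring.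
apply: ler_pM => //; first exact: cos_lipschitz.
by rewrite (le_trans (ler_normD _ _)) // -[2]/(1 + 1) lerD // cos_max.
Qed.

Lemma W_tau_false0 : W lam (tau lam false 0) = 1.
Proof. by rewrite W_tau_false mulr0 cos0 expr1n. Qed.

Lemma W_tau_true_half_odd (n : nat) : W lam (tau lam true (((2 * n)%:R - 1) / 4)) = 1.
Proof.
rewrite W_tau_true.
have -> : 2 * pi * (((2 * n)%:R - 1) / 4) = pi *+ n - pi / 2 :> R.
  by rewrite natrM -mulr_natr; field.
rewrite sinBpihalf sqrrN; elim: n => [|n IH]; first by rewrite mulr0n cos0 expr1n.
by rewrite mulrSr cosDpi sqrrN.
Qed.

Lemma tau_true_half_odd {n : nat} : (0 < n)%N -> lam = 1 - (2 * n)%:R^-1 ->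
  tau lam true (((2 * n)%:R - 1) / 4) = ((2 * n)%:R - 1) / 4.
Proof.
move=> n0 ->; have : n%:R != 0 :> R by rewrite pnatr_eq0 -lt0n.
by rewrite /tau natrM => nz; field.
Qed.

End Maps.

(** * Path measures *)

(* The measure instance of [pushforward] needs the measurability of [shift],
   which instance inference cannot find by itself. *)
Definition shift_pushforward {R : realType} (mu : {measure set Omega -> \bar R}) :
  {measure set Omega -> \bar R}.
Proof. by refine (pushforward mu (shift : Omega -> Omega)); exact: shift_measurable. Defined.

(* [htail P false] is h_0 and [htail P true] is h_1. *)
Definition htail {R : realType} (P : R -> probability Omega R) (b : bool) (x : R) : R :=
  fine (P x (tail_eq b)).

Lemma attractor_tau_stable {R : realType} {lam : R} {X : set R} :
  is_attractor lam X -> forall b x, X x -> X (tau lam b x).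
Proof. by move=> [_ [_ XE]] b x Xx; rewrite XE; case: b; [right|left]; exists x. Qed.

Section PathMeasures.
Context {R : realType} {lam : R} {X : set R} {P : R -> probability Omega R}.
Hypothesis tau_stable : forall b x, X x -> X (tau lam b x).
Hypothesis hP : is_path_measures lam X P.

Lemma path_measure_head b x E : X x -> measurableOm E ->
  P x (head_is b `&` shift @^-1` E) = ((W lam (tau lam b x))%:E * P (tau lam b x) E)%E.
Proof.
move=> Xx mE.
pose m1 := shift_pushforward (mrestr (P x) (head_is_measurable b)).
pose m2 : {measure set Omega -> \bar R} :=
  mscale (NngNum (@W_ge0 _ lam (tau lam b x))) (P (tau lam b x)).
have -> : P x (head_is b `&` shift @^-1` E) = m1 E.
  by rewrite /m1 /shift_pushforward /= /pushforward /mrestr setIC.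
rewrite (_ : _ * _ = m2 E)%E //.
apply: (@measure_unique _ R Omega cylinders0 (fun=> setT) measurable_cylinders0
  cylinders0_setI_closed _ _ m1 m2) => //.
- by move=> _; right; exists 0%N, (fun=> false); apply/seteqP; split.
- by rewrite bigcup_const.
- move=> A [->|[n [w ->]]]; first by rewrite !measure0.
  rewrite /m1 /m2 /= /pushforward /mrestr /mscale /= setIC -cyl_scons.
  by rewrite hP // cylw_scons hP //; exact: tau_stable.
- move=> _; rewrite /m1 /shift_pushforward /= /pushforward /mrestr.
  rewrite (le_lt_trans (probability_le1 _ _)) ?ltey //.
  by rewrite preimage_setT setTI; exact: head_is_measurable.
Qed.

Lemma path_measure_heads x E0 E1 : X x -> measurableOm E0 -> measurableOm E1 ->
  P x ((head_is false `&` shift @^-1` E0) `|` (head_is true `&` shift @^-1` E1)) =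
  ((W lam (tau lam false x))%:E * P (tau lam false x) E0 +
   (W lam (tau lam true x))%:E * P (tau lam true x) E1)%E.
Proof.
move=> Xx m0 m1; rewrite -!path_measure_head //; apply: measureU.
- by apply: measurableI; [exact: head_is_measurable|exact: shift_preimage_measurable].
- by apply: measurableI; [exact: head_is_measurable|exact: shift_preimage_measurable].
- by apply/seteqP; split => // w [[h0 _] [h1 _]]; have := etrans (esym h0) h1.
Qed.

Lemma path_measure_shift x E : X x -> measurableOm E ->
  P x (shift @^-1` E) = ((W lam (tau lam false x))%:E * P (tau lam false x) E +
                         (W lam (tau lam true x))%:E * P (tau lam true x) E)%E.
Proof. by move=> Xx mE; rewrite {1}(split_head (shift @^-1` E)); exact: path_measure_heads. Qed.

Lemma fine_path_measure_split x n E : X x -> depends_on n.+1 E ->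
  fine (P x E) =
    W lam (tau lam false x) * fine (P (tau lam false x) (scons false @^-1` E)) +
    W lam (tau lam true x) * fine (P (tau lam true x) (scons true @^-1` E)).
Proof.
move=> Xx hE; have m c := depends_on_measurable (depends_on_scons c hE).
by rewrite {1}(split_head E) path_measure_heads // fine_probability_mix.
Qed.

Lemma htail_harmonic b x : X x -> RW lam (htail P b) x = htail P b x.
Proof.
move=> Xx; have mN := tail_eq_measurable b.
by rewrite [RHS]/htail -shift_preimage_tail_eq path_measure_shift // fine_probability_mix.
Qed.

Lemma tail_eq_null b (M : set R) : M `<=` X ->
  (forall c y, M y -> W lam (tau lam c y) != 0 -> M (tau lam c y)) ->
  (forall y, M y -> exists k, W lam (tau lam b (iter k (tau lam b) y)) = 0) ->
  forall y, M y -> P y (tail_eq b) = 0%E.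
Proof.
move=> MX Mstable Mhit.
have const_from_null m y : M y -> P y (const_from b m) = 0%E.
  elim: m y => [|m IH] y My.
    have [k Wk] := Mhit y My.
    apply/eqP; rewrite eq_le measure_ge0 andbT.
    have <- : P y (cyl k.+1 (fun=> b)) = 0%E.
      by rewrite hP; [rewrite /cylw (big_ord_recr k) /= taus_const Wk mulr0|exact: MX].
    apply: (le_measure (P y)); rewrite ?inE; [exact: const_from_measurable|exact: cyl_measurable|].
    by move=> w h i _; exact: h.
  rewrite -shift_preimage_const_from path_measure_shift; [|exact: MX|exact: const_from_measurable].
  have term c : ((W lam (tau lam c y))%:E * P (tau lam c y) (const_from b m))%E = 0%E.
    have [->|/(Mstable c y My) Mc] := eqVneq (W lam (tau lam c y)) 0; first by rewrite mul0e.
    by rewrite IH // mule0.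
  by rewrite !term adde0.
move=> y My; have := tail_eq_cvg (P y) b.
rewrite (_ : _ \o _ = cst 0%E); last by apply/funext => m; exact: const_from_null.
by move=> /cvg_lim <-; rewrite ?lim_cst.
Qed.

Lemma htail_ge0 b x : 0 <= htail P b x.
Proof. exact: fine_probability_ge0. Qed.

Lemma htail_le1 b x : htail P b x <= 1.
Proof. exact: fine_probability_le1 (tail_eq_measurable b). Qed.

Lemma htail_sum_le1 x : htail P false x + htail P true x <= 1.
Proof.
have mN := tail_eq_measurable.
rewrite -lee_fin EFinD !(fine_probabilityK _ (mN _)) -measureU //; last exact: tail_eq_disjoint.
by apply: probability_le1; apply: measurableU.
Qed.

Lemma htail_neq0 b x : htail P b x != 0 -> P x (tail_eq b) != 0%E.
Proof. by apply: contra => /eqP; rewrite /htail => ->. Qed.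

Hypotheses (lam_gt0 : 0 < lam) (lam_lt1 : lam < 1).

Let lam_neq0 : lam != 0. Proof. by rewrite gt_eqF. Qed.

(* [K = 4 pi + lam K]: the first weight [W o tau_0] is [4 pi]-Lipschitz, and
   after the first letter the two starting points are [lam] times closer. *)
Let K := 4 * pi / (1 - lam).

Let K_ge0 : 0 <= K.
Proof. by rewrite divr_ge0 ?mulr_ge0 ?pi_ge0 // subr_ge0 ltW. Qed.

Let K_fix : 4 * pi + K * lam = K.
Proof. by rewrite /K; field; rewrite subr_eq0 gt_eqF. Qed.

Lemma depends_on_lipschitz {n E x y} : depends_on n E -> X x -> X y ->
  `|fine (P x E) - fine (P y E)| <= K * `|x - y|.
Proof.
elim: n E x y => [|n IH] E x y hE Xx Xy.
  have K0 : 0 <= K * `|x - y| by rewrite mulr_ge0.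
  by case: (depends_on0 hE) => ->; rewrite ?measure0 ?probability_setT subrr normr0.
have tau_dist c : `|tau lam c x - tau lam c y| = lam * `|x - y|.
  by rewrite (tau_affine c x y) addrAC subrr add0r normrM gtr0_norm.
have W_true z : W lam (tau lam true z) = 1 - W lam (tau lam false z).
  by rewrite -(W_tau_sum lam_neq0 false z) addrC addKr.
have m c := depends_on_measurable (depends_on_scons c hE).
have d c : `|fine (P (tau lam c x) (scons c @^-1` E)) - fine (P (tau lam c y) (scons c @^-1` E))|
    <= K * (lam * `|x - y|).
  by rewrite -(tau_dist c); apply: IH; [exact: depends_on_scons|exact: tau_stable..].
have p01 : `|fine (P (tau lam false x) (scons false @^-1` E)) -
             fine (P (tau lam true x) (scons true @^-1` E))| <= 1.
  have := fine_probability_le1 (P (tau lam false x)) (m false).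
  have := fine_probability_le1 (P (tau lam true x)) (m true).
  have := fine_probability_ge0 (P (tau lam false x)) (scons false @^-1` E).
  have := fine_probability_ge0 (P (tau lam true x)) (scons true @^-1` E).
  by rewrite ler_norml; move=> *; apply/andP; split; lra.
rewrite !(fine_path_measure_split _ _ _ _ hE) // !W_true.
apply: le_trans (convex_comb_dist _ p01 (d false) (d true)) _.
  by rewrite W_ge0 W_le1.
have -> : K * `|x - y| = 4 * pi * `|x - y| + K * (lam * `|x - y|).
  by rewrite -{1}K_fix; ring.
by rewrite lerD2r W_tau_false_lipschitz.
Qed.

Lemma htail_lipschitz b x y : X x -> X y ->
  `|htail P b x - htail P b y| <= K * `|x - y|.
Proof.
move=> Xx Xy.
have tail z := fine_probability_cvg (P z) (tail_eq_measurable b) (tail_eq_cvg (P z) b).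
apply: dist_le_cvg (tail x) (tail y) _ => m.
have from z := fine_probability_cvg (P z) (const_from_measurable b m) (const_from_cvg (P z) b m).
apply: dist_le_cvg (from x) (from y) _ => k.
exact: depends_on_lipschitz (const_between_depends_on b m k) Xx Xy.
Qed.

Lemma htail_continuous b : {within X, continuous (htail P b)}.
Proof. exact: lipschitz_within_continuous K_ge0 (htail_lipschitz b). Qed.

(** * Fixed points and the minimum principle *)

Lemma iter_tau_cvg {b p} y : tau lam b p = p -> (fun k => iter k (tau lam b) y) @ \oo --> p.
Proof.
move=> fp.
have -> : (fun k => iter k (tau lam b) y) = (fun k => p + lam ^+ k * (y - p)).
  apply/funext => k; elim: k => [|k /= ->]; first by rewrite expr0 mul1r addrC subrK.
  by rewrite (tau_affine b _ p) fp exprS; ring.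
rewrite -[X in _ --> X]addr0 -(mul0r (y - p)).
by apply: cvgD; [exact: cvg_cst|apply: cvgMl; apply: cvg_expr; rewrite gtr0_norm].
Qed.

Hypotheses (X_nonempty : X !=set0) (X_compact : compact X).

Lemma tau_fixpoint_mem {b p} : tau lam b p = p -> X p.
Proof.
move=> fp; have [a Xa] := X_nonempty.
have X_closed : closed X by apply: compact_closed => //; exact: hausdorff_space_normed.
apply: (closed_cvg _ X_closed _ _ (iter_tau_cvg a fp)).
by apply: nearW => k; elim: k => //= k IH; exact: tau_stable.
Qed.

Lemma const_from0_fixpoint {b p} : tau lam b p = p -> W lam (tau lam b p) = 1 ->
  P p (const_from b 0) = 1%:E.
Proof.
move=> fp Wp; have := const_from_cvg (P p) b 0.
rewrite (_ : _ \o _ = cst 1%:E); first by move=> /cvg_lim <-; rewrite ?lim_cst.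
apply/funext => k /=; rewrite const_between0 hP; last exact: tau_fixpoint_mem fp.
by rewrite /cylw big1 // => i _; rewrite taus_const iter_fix // -{1}fp.
Qed.

Lemma htail_fixpoint {b p} : tau lam b p = p -> W lam (tau lam b p) = 1 ->
  htail P b p = 1 /\ htail P (~~ b) p = 0.
Proof.
move=> fp Wp; have P1 := const_from0_fixpoint fp Wp.
have m0 := const_from_measurable b 0.
split; apply/eqP; rewrite eq_le.
- rewrite htail_le1 /= -lee_fin fine_probabilityK; last exact: tail_eq_measurable.
  have sub : const_from b 0 `<=` tail_eq b by move=> w h; exists 0%N.
  apply: le_trans (le_measure (P p) _ _ sub).
    by change (1%:E <= P p (const_from b 0))%E; rewrite P1 lexx.
  + by rewrite inE; exact: m0.
  + by rewrite inE; exact: tail_eq_measurable.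
- rewrite htail_ge0 andbT -lee_fin fine_probabilityK; last exact: tail_eq_measurable.
  rewrite (_ : 0%:E = P p (~` const_from b 0)); last by rewrite probability_setC // P1 subee.
  apply: (le_measure (P p)); rewrite ?inE; [exact: tail_eq_measurable|exact: measurableC|].
  move=> w [m hm] h0; have := hm m (leqnn m); rewrite (h0 m) //.
  by case: b {fp Wp P1 m0 h0 hm}.
Qed.

Lemma harmonic_min_closed (h : R -> R) xm c y :
  (forall x, X x -> RW lam h x = h x) -> (forall x, X x -> h xm <= h x) ->
  X y -> h y = h xm -> W lam (tau lam c y) != 0 -> h (tau lam c y) = h xm.
Proof.
move=> harm hmin Xy hy Wc.
apply: (convex_comb_min (v := h (tau lam (~~ c) y)) _ (W_ge0 _) (W_tau_sum lam_neq0 c y)).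
- by rewrite lt_def Wc W_ge0.
- exact/hmin/tau_stable.
- exact/hmin/tau_stable.
- by rewrite -hy -(harm y Xy) /RW; case: c {Wc} => //; exact: addrC.
Qed.

Lemma harmonic_min_eq_fixpoint (h : R -> R) b p xm :
  {within X, continuous h} -> (forall x, X x -> RW lam h x = h x) ->
  tau lam b p = p -> X xm -> (forall x, X x -> h xm <= h x) ->
  P xm (tail_eq b) != 0%E -> h xm = h p.
Proof.
move=> hc harm fp Xxm hmin Pne.
pose M := [set y | X y /\ h y = h xm].
have Mstable c y : M y -> W lam (tau lam c y) != 0 -> M (tau lam c y).
  by move=> [Xy hy] Wc; split; [exact: tau_stable|exact: harmonic_min_closed].
have [hit|] := pselect (forall y, M y -> exists k, W lam (tau lam b (iter k (tau lam b) y)) = 0).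
  by rewrite (tail_eq_null b M (fun y My => My.1) Mstable hit) ?eqxx in Pne.
move=> /existsNP [y /not_implyP [My /forallNP orbit]].
have Mk k : M (iter k (tau lam b) y).
  by elim: k => // k IH; apply: Mstable => //; apply/eqP/orbit.
have := within_continuous_cvg hc (tau_fixpoint_mem fp) (fun k => (Mk k).1) (iter_tau_cvg y fp).
rewrite (_ : _ \o _ = cst (h xm)); first by move=> /cvg_lim <-; rewrite ?lim_cst.
by apply/funext => k; exact: (Mk k).2.
Qed.

Lemma harmonic_eq_one (h : R -> R) :
  {within X, continuous h} -> (forall x, X x -> RW lam h x = h x) -> (forall x, h x <= 1) ->
  (forall x, X x -> exists b p, [/\ tau lam b p = p, h p = 1 & P x (tail_eq b) != 0%E]) ->
  forall x, X x -> h x = 1.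
Proof.
move=> hc harm h_le1 hfix.
have [xm /set_mem Xxm hmin] := compact_EVT_min X_nonempty X_compact hc.
have {}hmin x : X x -> h xm <= h x by move=> Xx; apply/hmin/mem_set.
have [b [p [fp hp Pne]]] := hfix xm Xxm.
have hxm : h xm = 1 by rewrite -hp; exact: harmonic_min_eq_fixpoint hc harm fp Xxm hmin Pne.
by move=> x Xx; apply/eqP; rewrite eq_le h_le1 -hxm hmin.
Qed.

Let tau_false0 : tau lam false 0 = 0. Proof. by rewrite /tau mulr0. Qed.

Lemma htail_false_eq_one :
  (forall x, X x -> htail P false x != 0) -> forall x, X x -> htail P false x = 1.
Proof.
move=> nz; have [h00 _] := htail_fixpoint tau_false0 (W_tau_false0 lam_neq0).
apply: harmonic_eq_one (htail_continuous false) (htail_harmonic false) (htail_le1 false) _.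
by move=> x Xx; exists false, 0; split => //; exact/htail_neq0/nz.
Qed.

Lemma htail_sum_eq_one {p} : tau lam true p = p -> W lam (tau lam true p) = 1 ->
  (forall x, X x -> htail P false x + htail P true x != 0) ->
  forall x, X x -> htail P false x + htail P true x = 1.
Proof.
move=> fp Wp nz.
have [h00 h10] := htail_fixpoint tau_false0 (W_tau_false0 lam_neq0).
have [h1p h0p] := htail_fixpoint fp Wp.
apply: (harmonic_eq_one (htail P false \+ htail P true)).
- exact: within_continuousD (htail_continuous false) (htail_continuous true).
- move=> x Xx; rewrite /RW /= -(htail_harmonic false x Xx) -(htail_harmonic true x Xx).
  by rewrite /RW; ring.
- exact: htail_sum_le1.
move=> x Xx; have [h0x|h0x] := eqVneq (htail P false x) 0.
  exists true, p; split => //=; first by rewrite h0p h1p add0r.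
  by apply: htail_neq0; move: (nz x Xx); rewrite h0x add0r.
by exists false, 0; split => //=; [rewrite h00 h10 addr0|exact: htail_neq0].
Qed.

End PathMeasures.

Theorem lemma4p1 (R : realType) (lam : R) (hlam0 : 0 < lam) (hlam1 : lam < 1)
  (X : set R) (hX : is_attractor lam X)
  (P : R -> probability Omega R) (hP : is_path_measures lam X P) :
  ( {within X, continuous (h0 P)}
    /\ (forall x, X x -> RW lam (h0 P) x = h0 P x)
    /\ ((forall x, X x -> h0 P x != 0) -> forall x, X x -> h0 P x = 1) )
  /\
  (forall n : nat, (0 < n)%N -> lam = 1 - (2 * n)%:R^-1 ->
     {within X, continuous (h1 P)}
     /\ (forall x, X x -> RW lam (h1 P) x = h1 P x)
     /\ (exists2 x, X x & h0 P x = 0)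
     /\ (exists2 x, X x & h1 P x = 0)
     /\ (exists x y, [/\ X x, X y & h0 P x != h0 P y])
     /\ (exists x y, [/\ X x, X y & h1 P x != h1 P y])
     /\ ((forall x, X x -> h0 P x + h1 P x != 0) ->
           forall x, X x -> h0 P x + h1 P x = 1)).
Proof.
rewrite (_ : h0 P = htail P false) // (_ : h1 P = htail P true) //.
have [X_nonempty [X_compact _]] := hX; have tauX := attractor_tau_stable hX.
have lam_neq0 : lam != 0 by rewrite gt_eqF.
have cont := htail_continuous tauX hP hlam0 hlam1.
have harm := htail_harmonic tauX hP.
have fix_vals := htail_fixpoint tauX hP hlam0 hlam1 X_nonempty X_compact.
have fix_mem := tau_fixpoint_mem tauX hlam0 hlam1 X_nonempty X_compact.
have fp0 : tau lam false 0 = 0 by rewrite /tau mulr0.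
have [h00 h10] := fix_vals _ _ fp0 (W_tau_false0 lam_neq0).
split.
  split; [exact: cont|split; [exact: harm|]].
  exact: (htail_false_eq_one tauX hP hlam0 hlam1 X_nonempty X_compact).
move=> n n_gt0 lamE; pose p : R := ((2 * n)%:R - 1) / 4.
have fp : tau lam true p = p := tau_true_half_odd n_gt0 lamE.
have Wp := W_tau_true_half_odd lam_neq0 n.
have [h1p h0p] := fix_vals _ _ fp Wp.
have [X0 Xp] := (fix_mem _ _ fp0, fix_mem _ _ fp).
do 6?split; [exact: cont|exact: harm|by exists p|by exists 0| | |].
- by exists 0, p; rewrite h00 h0p oner_neq0.
- by exists 0, p; rewrite h10 h1p eq_sym oner_neq0.
exact: (htail_sum_eq_one tauX hP hlam0 hlam1 X_nonempty X_compact fp Wp).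
Qed.
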